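(* Let $n\ge 2$, $d\ge 2$ and $\mathbf{m}\in\mathbb{N}^n$ with $|\mathbf{m}|=d$ and $\max(\mathbf{m})<d-1$. Then $\mathcal{A}_{n,d}\setminus\mathcal{A}_{n,d,\mathbf{m}}=\{\mathbf{m}\}$.
   Context: For $\mathbf{a}\in\mathbb{N}^n$, $|\mathbf{a}|=\sum_i a_i$ and $\max(\mathbf{a})=\max_i a_i$. $T_{n,d}=\{\mathbf{a}\in\mathbb{N}^n:|\mathbf{a}|=d\}$; $\mathcal{A}_{n,d}$ is the (additive) semigroup generated by $T_{n,d}$; for $\mathbf{m}\in T_{n,d}$, $\mathcal{A}_{n,d,\mathbf{m}}$ is the semigroup generated by $T_{n,d}\setminus\{\mathbf{m}\}$. *)

From mathcomp Require Import all_boot.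
Set Implicit Arguments. Unset Strict Implicit. Unset Printing Implicit Defensive.

Definition vec (n : nat) := {ffun 'I_n -> nat}.

Definition vsize n (a : vec n) : nat := \sum_(i < n) a i.

Definition vmax n (a : vec n) : nat := \max_(i < n) a i.

Definition vadd n (a b : vec n) : vec n := [ffun i => a i + b i].

Inductive semigroup_gen n (S : vec n -> Prop) : vec n -> Prop :=
  | sg_base a : S a -> semigroup_gen S a
  | sg_add a b : semigroup_gen S a -> semigroup_gen S b ->
                 semigroup_gen S (vadd a b).

Definition T n d (a : vec n) : Prop := vsize a = d.

Definition A n d : vec n -> Prop := semigroup_gen (@T n d).

Definition Am n d (m : vec n) : vec n -> Prop :=
  semigroup_gen (fun a => T d a /\ a <> m).

From mathcomp Require Import all_boot.
From mathcomp Require Import zify.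
Set Implicit Arguments. Unset Strict Implicit. Unset Printing Implicit Defensive.

(* Since every generator has size d, m is not a sum of two or more
   generators, so m is not in A_{n,d,m}.  Conversely, by induction on A_{n,d}
   it suffices that m + c lies in A_{n,d,m} for each c in T_{n,d}.  Choosing
   j with c_j > 0 and i <> j with m_i > 0 (possible as m_j <= max(m) < d),
   move a unit across: m + c = (m - e_i + e_j) + (c + e_i - e_j), where the
   first summand differs from m and the second does too unless
   c = m - e_i + e_j; in that case max(m) < d - 1 leaves another choice. *)

Section Vectors.

Variable n : nat.
Implicit Types (a b c v : vec n) (i j k : 'I_n).

Lemma vaddC a b : vadd a b = vadd b a.
Proof. by apply/ffunP => k; rewrite !ffunE addnC. Qed.

Lemma vaddA a b c : vadd a (vadd b c) = vadd (vadd a b) c.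
Proof. by apply/ffunP => k; rewrite !ffunE addnA. Qed.

Lemma vaddIr c : injective (fun a : vec n => vadd a c).
Proof.
move=> a b /ffunP eq_ac_bc; apply/ffunP => k.
by have /eqP := eq_ac_bc k; rewrite !ffunE eqn_add2r => /eqP.
Qed.

Lemma vsizeD a b : vsize (vadd a b) = vsize a + vsize b.
Proof. by rewrite /vsize -big_split; apply: eq_bigr => i _; rewrite ffunE. Qed.

Lemma leq_vmax v k : v k <= vmax v.
Proof. exact: leq_bigmax. Qed.

Lemma sum_gt0_exists (P : pred 'I_n) v :
  0 < \sum_(k | P k) v k -> exists2 k, P k & 0 < v k.
Proof.
rewrite lt0n sum_nat_eq0 => /forallPn [k].
by rewrite negb_imply -lt0n => /andP []; exists k.
Qed.

Lemma vsize_gt0_exists v : 0 < vsize v -> exists k, 0 < v k.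
Proof. by case/sum_gt0_exists=> k _; exists k. Qed.

Lemma vsize_gt_exists v j : v j < vsize v -> exists2 i, i != j & 0 < v i.
Proof.
by rewrite /vsize (bigD1 j) //= -{1}[v j]addn0 ltn_add2l => /sum_gt0_exists.
Qed.

Lemma vsize2 v i j : i != j -> (forall k, k != i -> k != j -> v k = 0) ->
  vsize v = v i + v j.
Proof.
move=> ij v0; rewrite /vsize (bigD1 i) //= (bigD1 j) /=; last by rewrite eq_sym.
by rewrite big1 ?addn0 // => k /andP [ki kj]; apply: v0.
Qed.

Definition vmove i j v : vec n :=
  [ffun k => if k == i then (v k).-1 else if k == j then (v k).+1 else v k].

Lemma vmove_src i j v : vmove i j v i = (v i).-1.
Proof. by rewrite ffunE eqxx. Qed.

Lemma vmove_dst i j v : i != j -> vmove i j v j = (v j).+1.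
Proof. by move=> ij; rewrite ffunE eq_sym (negbTE ij) eqxx. Qed.

Lemma vmove_other i j v k : k != i -> k != j -> vmove i j v k = v k.
Proof. by move=> ki kj; rewrite ffunE (negbTE ki) (negbTE kj). Qed.

Lemma vsize_vmove i j v : i != j -> 0 < v i -> vsize (vmove i j v) = vsize v.
Proof.
move=> ij vi; rewrite /vsize (bigD1 i) //= (bigD1 j) /= ?(eq_sym j) //.
rewrite [in RHS](bigD1 i) //= [in RHS](bigD1 j) /= ?(eq_sym j) //.
rewrite vmove_src vmove_dst //.
under eq_bigr => k /andP [ki kj] do rewrite vmove_other //.
lia.
Qed.

Lemma vmove_neq i j v : i != j -> vmove i j v != v.
Proof.
by move=> ij; apply/eqP => /ffunP/(_ j); rewrite vmove_dst // => /esym/n_Sn.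
Qed.

Lemma vadd_vmove i j a b : i != j -> 0 < a i -> 0 < b j ->
  vadd a b = vadd (vmove i j a) (vmove j i b).
Proof.
move=> ij ai bj; apply/ffunP => k; rewrite !ffunE.
have [->|ki] := eqVneq k i; first by rewrite (negbTE ij); lia.
by case: eqP => [->|_]; lia.
Qed.

End Vectors.

Section Exchange.

Variables (n d : nat) (m : vec n).
Hypotheses (d_ge2 : 2 <= d) (size_m : vsize m = d) (max_m : vmax m < d - 1).

Lemma Am_add_vmove (c : vec n) i j :
  i != j -> 0 < m i -> 0 < c j -> vsize c = d -> vmove i j m != c ->
  Am d m (vadd m c).
Proof.
move=> ij mi cj size_c mv_c; rewrite (vadd_vmove ij mi cj).
apply: sg_add; apply: sg_base; split.
- by rewrite /T vsize_vmove.
- exact/eqP/vmove_neq.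
- by rewrite /T vsize_vmove // eq_sym.
- move=> mv_c_m; move/eqP: mv_c; apply.
  by apply: (@vaddIr _ m); rewrite [RHS]vaddC (vadd_vmove ij mi cj) mv_c_m.
Qed.

(* If c = m - e_i + e_j, a third coordinate of m is positive, or else m is
   supported on {i, j}, where both entries are at least 2 and (j, i) works. *)
Lemma exists_exchange (c : vec n) : vsize c = d ->
  exists i j, [/\ i != j, 0 < m i, 0 < c j & vmove i j m != c].
Proof.
move=> size_c.
have [j cj] : exists j, 0 < c j by apply: vsize_gt0_exists; lia.
have [i ij mi] : exists2 i, i != j & 0 < m i.
  by apply: vsize_gt_exists; have := leq_vmax m j; lia.
have [c_def|mv_c] := eqVneq (vmove i j m) c; last by exists i, j.
have [/existsP [k /and3P [kj ki mk]]|no_k] :=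
  boolP [exists k, [&& k != j, k != i & 0 < m k]].
  exists k, j; split => //; apply/eqP => /ffunP/(_ k).
  by rewrite -c_def vmove_src vmove_other //; lia.
have m_ij : vsize m = m i + m j.
  apply: vsize2 => // k ki kj; apply/eqP; rewrite -leqn0 leqNgt.
  by apply/negP => mk; move/existsP: no_k; apply; exists k; rewrite kj ki mk.
have := leq_vmax m i; have := leq_vmax m j => mj_le mi_le.
exists j, i; split; rewrite ?(eq_sym j) //.
- lia.
- by rewrite -c_def vmove_src; lia.
- apply/eqP => /ffunP/(_ j); rewrite -c_def vmove_src vmove_dst //; lia.
Qed.

Lemma Am_addm_T (c : vec n) : T d c -> Am d m (vadd m c).
Proof.
move=> size_c; have [i [j [ij mi cj mv_c]]] := exists_exchange size_c.
exact: Am_add_vmove mv_c.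
Qed.

Lemma Am_addm y : Am d m y -> Am d m (vadd m y).
Proof.
elim=> [a [Ta _]|a b _ IHa Hb _]; first exact: Am_addm_T.
by rewrite vaddA; apply: sg_add.
Qed.

Lemma A_eq_or_Am x : A d x -> x = m \/ Am d m x.
Proof.
elim=> [a Ta|a b _ [->|Ha] _ [->|Hb]].
- have [->|a_neq_m] := eqVneq a m; first by left.
  by right; apply: sg_base; split=> //; apply/eqP.
- by right; apply: Am_addm_T; rewrite /T.
- by right; apply: Am_addm.
- by right; rewrite vaddC; apply: Am_addm.
- by right; apply: sg_add.
Qed.

End Exchange.

Lemma semigroup_gen_vsize n d (S : vec n -> Prop) x :
  (forall a, S a -> vsize a = d) ->
  semigroup_gen S x -> S x \/ 2 * d <= vsize x.
Proof.
move=> S_size; elim=> [a Sa|a b _ IHa _ IHb]; first by left.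
right; rewrite vsizeD.
by case: IHa => [/S_size ->|ha]; case: IHb => [/S_size ->|hb]; lia.
Qed.

Theorem lemma2p17 (n d : nat) (m : vec n) :
  2 <= n -> 2 <= d -> vsize m = d -> vmax m < d - 1 ->
  forall x : vec n, (A d x /\ ~ Am d m x) <-> x = m.
Proof.
(* n >= 2 is implied by max(m) < d - 1. *)
move=> _ d_ge2 size_m max_m x; split.
  by case=> /(A_eq_or_Am d_ge2 size_m max_m) [] // Amx /(_ Amx).
move=> ->; split; first exact: sg_base.
case/(semigroup_gen_vsize (d := d)) => [a []|[]|] //.
by rewrite size_m; lia.
Qed.
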